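(* For every $d \in \mathbb{Z}_{>0}$, one has $\mathrm{rc}_\ell(\Delta_d) \le \lceil d/2 \rceil + 2$, where $\Delta_d = \{0, e_1, \dots, e_d\} \subseteq \mathbb{Z}^d$.
   Context: For $X, Y \subseteq \mathbb{Z}^d$, $\mathrm{rc}(X,Y)$ is the smallest number of inequalities in a linear system $Ax \le b$ satisfied by all points of $X$ and such that each point of $Y\setminus X$ violates at least one inequality. With $B_t = [-t,t]^d\cap\mathbb{Z}^d$, $\mathrm{rc}_\ell(X) = \max_{t\in\mathbb{Z}_{>0}} \mathrm{rc}(X,B_t)$. $e_i$ denotes the $i$-th standard unit vector. *)

From mathcomp Require Import all_boot all_order all_algebra.
From mathcomp Require Import reals.
Set Implicit Arguments. Unset Strict Implicit. Unset Printing Implicit Defensive.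
Import Order.TTheory GRing.Theory Num.Theory.
Local Open Scope ring_scope.

Definition ptset (d : nat) := 'rV[int]_d -> Prop.

Definition unitvec (d : nat) (i : 'I_d) : 'rV[int]_d := \row_j (i == j)%:R.

Definition Delta (d : nat) : ptset d :=
  fun x => x = 0 \/ exists i : 'I_d, x = unitvec i.

Definition Bbox (d : nat) (t : int) : ptset d :=
  fun x => forall j : 'I_d, `|x 0 j| <= t.

Definition satisfies (R : realType) (d k : nat) (A : 'M[R]_(k, d)) (b : 'I_k -> R)
  (x : 'rV[int]_d) : Prop :=
  forall i : 'I_k, \sum_(j < d) A i j * (x 0 j)%:~R <= b i.

Definition is_relaxation (R : realType) (d k : nat) (X Y : ptset d)
  (A : 'M[R]_(k, d)) (b : 'I_k -> R) : Prop :=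
  (forall x, X x -> satisfies A b x) /\
  (forall y, Y y -> ~ X y -> exists i : 'I_k,
       b i < \sum_(j < d) A i j * (y 0 j)%:~R).

Definition has_relaxation_of_size (R : realType) (d : nat) (X Y : ptset d) (k : nat) :=
  exists (A : 'M[R]_(k, d)) (b : 'I_k -> R), is_relaxation X Y A b.

(* rc_is X Y r  <->  r = rc(X,Y), i.e. r is the smallest number of
   inequalities of such a system (and such a system exists). *)
Definition rc_is (R : realType) (d : nat) (X Y : ptset d) (r : nat) : Prop :=
  @has_relaxation_of_size R d X Y r /\
  (forall k, @has_relaxation_of_size R d X Y k -> (r <= k)%N).

(* rcl_is X r  <->  r = rc_l(X) = max_{t in Z_{>0}} rc(X, B_t)
   (all rc(X,B_t) exist, are <= r, and r is attained). *)
Definition rcl_is (R : realType) (d : nat) (X : ptset d) (r : nat) : Prop :=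
  (forall t : int, 0 < t -> exists rt, @rc_is R d X (@Bbox d t) rt /\ (rt <= r)%N) /\
  (exists t : int, 0 < t /\ @rc_is R d X (@Bbox d t) r).

From mathcomp Require Import all_boot all_order all_algebra.
From mathcomp Require Import reals.
From mathcomp Require Import zify boolp.
Set Implicit Arguments. Unset Strict Implicit. Unset Printing Implicit Defensive.
Import Order.TTheory GRing.Theory Num.Theory.
Local Open Scope ring_scope.

(* Take k = ceil(d/2) and pair coordinate p < k with coordinate k + p.  On the box B_t
   the k inequalities (t + 1) x_p + x_(k+p) >= 0 say that (x_p, x_(k+p)) is lexicographically
   nonnegative.  Two more inequalities, with coefficients dwarfing everything that can occur on
   B_t, involve the head sum A = x_0 + ... + x_(k-1), the tail sum B = x_k + ... + x_(d-1) and
   the tail weight W = sum_i (t + 1)^i x_(k+i); they force A + B <= 1, and W = 0 unless A = 0.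
   If A = 0 the pair inequalities make the tail nonnegative; if W = 0 the tail vanishes, since
   its entries are digits of absolute value at most t in base t + 1.  Either way x >= 0 with
   coordinate sum at most 1, i.e. x lies in Delta_d. *)

Lemma base_expansion_eq0 (b : int) (n : nat) (c : nat -> int) :
  (forall i, `|c i| < b) -> \sum_(i < n) c i * b ^+ i = 0 ->
  forall i, (i < n)%N -> c i = 0.
Proof.
elim: n c => [//|n IHn] c c_lt_b.
rewrite big_ord_recl expr0 mulr1.
under eq_bigr => i _ do rewrite lift0 exprS mulrCA.
rewrite -mulr_sumr /=; set S := \sum_(i < n) _ => sum0.
have S0 : S = 0.
  have := c_lt_b 0%N; rewrite (_ : c 0%N = - (b * S)); last lia.
  rewrite normrN normrM; nia.
have c00 : c 0%N = 0 by lia.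
case=> [|i] lt_in; first exact: c00.
exact: (IHn (c \o succn) (fun j => c_lt_b j.+1) S0 i lt_in).
Qed.

Lemma Delta_nonneg_sum_le1 (d : nat) (x : 'rV[int]_d) :
  (forall j, 0 <= x 0 j) -> \sum_j x 0 j <= 1 -> Delta x.
Proof.
move=> x_ge0 sum_le1.
have [/existsP [i xi_neq0] | /existsPn x_eq0] := boolP [exists i, x 0 i != 0]; last first.
  by left; apply/rowP => j; rewrite mxE; apply/eqP; rewrite -[_ == _]negbK x_eq0.
right; exists i.
have rest_ge0 : 0 <= \sum_(j | j != i) x 0 j by apply: sumr_ge0.
move: sum_le1; rewrite (bigD1 i) //= => sum_le1.
have [xi1 rest0] : x 0 i = 1 /\ \sum_(j | j != i) x 0 j = 0.
  move: (x_ge0 i) xi_neq0 sum_le1 rest_ge0.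
  set a := x 0 i; set s := \sum_(j | _) _; move=> /= + /eqP; lia.
apply/rowP => j; rewrite /unitvec !mxE; have [<-|ji] := eqVneq i j; first by [].
by rewrite (psumr_eq0P _ rest0) // eq_sym ji.
Qed.

Lemma relaxation_of_int_system (R : realType) (d k : nat) (X Y : ptset d)
    (C : 'M[int]_(k, d)) (b : 'I_k -> int) :
  (forall x, X x -> forall i, \sum_j C i j * x 0 j <= b i) ->
  (forall y, Y y -> (forall i, \sum_j C i j * y 0 j <= b i) -> X y) ->
  has_relaxation_of_size R X Y k.
Proof.
move=> satX solY; exists (map_mx intr C), (fun i => (b i)%:~R).
have sumE x i : \sum_j (map_mx intr C : 'M[R]_(k, d)) i j * (x 0 j)%:~R
    = (\sum_j C i j * x 0 j)%:~R.
  by rewrite rmorph_sum; apply: eq_bigr => j _; rewrite mxE rmorphM.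
split=> [x Xx i | y Yy notXy]; first by rewrite sumE ler_int satX.
have [/existsP [i] | /existsPn sat] := boolP [exists i, b i < \sum_j C i j * y 0 j].
  by exists i; rewrite sumE ltr_int.
by case: notXy; apply: solY => // i; rewrite leNgt sat.
Qed.

Lemma rc_exists (R : realType) (d : nat) (X Y : ptset d) (m : nat) :
  has_relaxation_of_size R X Y m -> exists r, rc_is R X Y r /\ (r <= m)%N.
Proof.
move=> relm; have ex : exists n, `[< has_relaxation_of_size R X Y n >].
  by exists m; apply/asboolP.
case: (ex_minnP ex) => r /asboolP relr minr.
exists r; split; last exact/minr/asboolP.
by split=> // n reln; apply/minr/asboolP.
Qed.

Lemma rcl_exists (R : realType) (d : nat) (X : ptset d) (m : nat) :
  (forall t : int, 0 < t -> has_relaxation_of_size R X (Bbox t) m) ->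
  exists r, rcl_is R X r /\ (r <= m)%N.
Proof.
move=> relm.
pose attained n := `[< exists t : int, 0 < t /\ rc_is R X (Bbox t) n >].
have ex : exists n, attained n.
  have [n [rcn _]] := rc_exists (relm 1 ltr01).
  by exists n; apply/asboolP; exists 1.
have le_m n : attained n -> (n <= m)%N.
  by move=> /asboolP [t [t_gt0 [_ minn]]]; apply/minn/relm.
case: (ex_maxnP ex le_m) => r attr maxr.
exists r; split; last exact: le_m.
split; last exact/asboolP.
move=> t t_gt0; have [n [rcn _]] := rc_exists (relm t t_gt0).
by exists n; split=> //; apply/maxr/asboolP; exists t.
Qed.

Lemma pair_ineq_lex_ge0 (t a b : int) :
  `|b| <= t -> 0 <= (t + 1) * a + b -> 0 <= a /\ (a = 0 -> 0 <= b).
Proof. move=> b_le_t pair_ge0; split=> [|a0]; [nia | move: pair_ge0; rewrite a0; lia]. Qed.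

(* (M + 1)^2 exceeds (M + 1) |B| + |W|, so the two inequalities bound A and A + B by 1; for
   A = 1 they give 0 <= -W and W <= (M + 1) B with B <= 0, and |W| < M + 1 forces B = 0 = W. *)
Lemma two_block_bounds (M A B W : int) : 0 <= A -> `|B| <= M -> `|W| <= M ->
  (M + 1) ^+ 2 * A + W - (M + 1) * B <= (M + 1) ^+ 2 ->
  (M + 1) ^+ 2 * (A + B) - (M + 1) * B - W <= (M + 1) ^+ 2 ->
  A + B <= 1 /\ (A = 0 \/ W = 0).
Proof.
move=> A_ge0 B_le W_le upper lower.
have A_le1 : A <= 1 by nia.
have AB_le1 : A + B <= 1 by nia.
split=> //; have [->|A1] : A = 0 \/ A = 1 by lia.
  by left.
by right; rewrite A1 in upper lower; nia.
Qed.

Lemma norm_sum_le (n : nat) (F : nat -> int) (c : int) :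
  (forall i, (i < n)%N -> `|F i| <= c) -> `|\sum_(i < n) F i| <= n%:R * c.
Proof.
move=> F_le; apply: le_trans (ler_norm_sum _ _ _) _.
rewrite mulr_natl -[in X in _ *+ X](card_ord n) -sumr_const.
by apply: ler_sum => i _; apply: F_le.
Qed.

Section Coordinates.

Variables (d : nat) (t : int).
Hypothesis t_gt0 : 0 < t.

(* Indices beyond d read as 0, so that the partner k + p of a head index p may be absent. *)
Definition coord (x : 'rV[int]_d) (n : nat) : int :=
  if insub n is Some j then x 0 j else 0.

Lemma coordE x (j : 'I_d) : coord x j = x 0 j.
Proof. by rewrite /coord valK. Qed.

Lemma coord_out x n : (d <= n)%N -> coord x n = 0.
Proof. by move=> le_dn; rewrite /coord insubF // ltnNge le_dn. Qed.

Lemma norm_coord_le x n : Bbox t x -> `|coord x n| <= t.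
Proof.
by rewrite /coord; case: insubP => [j _ _ box|_ _]; [apply: box | rewrite normr0 ltW].
Qed.

Lemma sum_coord_delta x n : \sum_(j < d) (j == n :> nat)%:R * coord x j = coord x n.
Proof.
under eq_bigr => j _ do rewrite mulr_natl mulrb.
by rewrite -big_mkcond big_ord1_eq; case: ltnP => // /coord_out ->.
Qed.

Definition tail_bound : int := d%:R * (t * (t + 1) ^+ d).

Lemma expr_le_tail_bound n : (n < d)%N -> (t + 1) ^+ n <= tail_bound.
Proof.
move=> lt_nd; have le_pow : (t + 1) ^+ n <= (t + 1) ^+ d.
  by apply: ler_weXn2l; [lia | apply: ltnW].
apply: (le_trans le_pow); rewrite /tail_bound mulrA.
apply: ler_peMl; first by apply: exprn_ge0; lia.
by rewrite -[1]mulr1; apply: ler_pM; rewrite ?ler1n; lia.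
Qed.

End Coordinates.

Section DeltaSystem.

Variables (d k : nat) (t : int).
Hypotheses (t_gt0 : 0 < t) (k_le_d : (k <= d)%N).

Lemma sum_split_blocks (F : nat -> int) :
  \sum_(j < d) F j = \sum_(i < k) F i + \sum_(i < d - k) F (k + i)%N.
Proof.
rewrite -(big_mkord xpredT F) (big_cat_nat (leq0n k) k_le_d) /= big_mkord.
congr (_ + _); rewrite -{1}[k]add0n big_addn big_mkord.
by apply: eq_bigr => i _; rewrite addnC.
Qed.

Let M := tail_bound d t.

Definition pair_row (p j : nat) : int :=
  - ((t + 1) * (j == p)%:R + (j == k + p)%N%:R).

Definition upper_row (j : nat) : int :=
  if (j < k)%N then (M + 1) ^+ 2 else (t + 1) ^+ (j - k) - (M + 1).

Definition lower_row (j : nat) : int :=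
  if (j < k)%N then (M + 1) ^+ 2
  else (M + 1) ^+ 2 - (M + 1) - (t + 1) ^+ (j - k).

Definition Delta_row (i j : nat) : int :=
  if (i < k)%N then pair_row i j else if i == k then upper_row j else lower_row j.

Definition Delta_mx : 'M[int]_(k.+2, d) := \matrix_(i, j) Delta_row i j.

Definition Delta_rhs (i : 'I_k.+2) : int :=
  if (i < k)%N then 0 else (M + 1) ^+ 2.

Definition head_sum (x : 'rV[int]_d) : int := \sum_(i < k) coord x i.
Definition tail_sum (x : 'rV[int]_d) : int := \sum_(i < d - k) coord x (k + i).
Definition tail_weight (x : 'rV[int]_d) : int :=
  \sum_(i < d - k) coord x (k + i) * (t + 1) ^+ i.

Lemma Delta_mx_sum (x : 'rV[int]_d) (i : 'I_k.+2) :
  \sum_j Delta_mx i j * x 0 j = \sum_(j < d) Delta_row i j * coord x j.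
Proof. by apply: eq_bigr => j _; rewrite mxE coordE. Qed.

Lemma pair_row_sum (x : 'rV[int]_d) (p : nat) :
  \sum_(j < d) pair_row p j * coord x j = - ((t + 1) * coord x p + coord x (k + p)).
Proof.
under eq_bigr => j _ do rewrite mulNr mulrDl -mulrA.
by rewrite sumrN big_split -mulr_sumr !sum_coord_delta.
Qed.

Lemma upper_row_sum (x : 'rV[int]_d) :
  \sum_(j < d) upper_row j * coord x j =
  (M + 1) ^+ 2 * head_sum x + tail_weight x - (M + 1) * tail_sum x.
Proof.
rewrite (sum_split_blocks (fun j => upper_row j * coord x j)) /=.
rewrite /head_sum /tail_weight /tail_sum !mulr_sumr -addrA -sumrB.
congr (_ + _); apply: eq_bigr => i _; rewrite /upper_row.
  by rewrite ltn_ord.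
by rewrite ltnNge leq_addr /= addKn mulrBl mulrC.
Qed.

Lemma lower_row_sum (x : 'rV[int]_d) :
  \sum_(j < d) lower_row j * coord x j =
  (M + 1) ^+ 2 * (head_sum x + tail_sum x)
  - (M + 1) * tail_sum x - tail_weight x.
Proof.
rewrite (sum_split_blocks (fun j => lower_row j * coord x j)) /=.
rewrite /head_sum /tail_weight /tail_sum mulrDr -!addrA !mulr_sumr -!sumrN -!big_split.
congr (_ + _); apply: eq_bigr => i _; rewrite /lower_row.
  by rewrite ltn_ord.
by rewrite ltnNge leq_addr /= addKn !mulrBl [_ ^+ i * _]mulrC addrA.
Qed.

Lemma tail_sum_bound (x : 'rV[int]_d) : Bbox t x -> `|tail_sum x| <= M.
Proof.
move=> box; apply: le_trans (norm_sum_le (fun i _ => norm_coord_le t_gt0 (k + i) box)) _.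
apply: ler_pM; [exact: ler0n | exact: ltW | by rewrite ler_nat leq_subr |].
by apply: ler_peMr; [exact: ltW | apply: exprn_ege1; lia].
Qed.

Lemma tail_weight_bound (x : 'rV[int]_d) : Bbox t x -> `|tail_weight x| <= M.
Proof.
move=> box; have pow_ge0 n : 0 <= (t + 1) ^+ n by apply: exprn_ge0; lia.
have term_le i : (i < d - k)%N -> `|coord x (k + i) * (t + 1) ^+ i| <= t * (t + 1) ^+ d.
  move=> lt_i; rewrite normrM (ger0_norm (pow_ge0 i)).
  apply: ler_pM => //; first exact: (norm_coord_le t_gt0 (k + i) box).
  by apply: ler_weXn2l; [lia | apply: leq_trans (ltnW lt_i) (leq_subr _ _)].
apply: le_trans (norm_sum_le term_le) _.
apply: ler_wpM2r; last by rewrite ler_nat leq_subr.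
by apply: mulr_ge0; [exact: ltW | exact: pow_ge0].
Qed.

Lemma Delta_satisfies (x : 'rV[int]_d) :
  Delta x -> forall i, \sum_j Delta_mx i j * x 0 j <= Delta_rhs i.
Proof.
have K_ge0 : 0 <= (M + 1) ^+ 2 := sqr_ge0 _.
case=> [->|[p ->]] i.
  rewrite big1 => [|j _]; last by rewrite !mxE mulr0.
  by rewrite /Delta_rhs; case: ifP.
rewrite (bigD1 p) //= big1 => [|j jp]; last first.
  by rewrite /unitvec !mxE eq_sym (negbTE jp) mulr0.
have M_ge1 : 1 <= M.
  by apply: (expr_le_tail_bound t_gt0 (n := 0)); apply: leq_ltn_trans (ltn_ord p).
have pow_le : (t + 1) ^+ (p - k) <= M.
  by apply: (expr_le_tail_bound t_gt0); apply: leq_ltn_trans (leq_subr k p) (ltn_ord p).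
have pow_ge0 : 0 <= (t + 1) ^+ (p - k) by apply: exprn_ge0; lia.
rewrite /unitvec !mxE eqxx mulr1 addr0 /Delta_row /Delta_rhs; case: ifP => _.
  by rewrite /pair_row; case: (_ == _); case: (_ == _) => /=; lia.
case: ifP => _; [rewrite /upper_row | rewrite /lower_row]; case: ifP => // _; lia.
Qed.

Lemma Delta_of_satisfies (d_le_kk : (d <= k + k)%N) (x : 'rV[int]_d) : Bbox t x ->
  (forall i, \sum_j Delta_mx i j * x 0 j <= Delta_rhs i) -> Delta x.
Proof.
move=> box sat.
have pair_ge0 p : (p < k)%N -> 0 <= (t + 1) * coord x p + coord x (k + p).
  move=> lt_pk; have lt_pk2 : (p < k.+2)%N by lia.
  have := sat (Ordinal lt_pk2).
  by rewrite Delta_mx_sum /Delta_row /Delta_rhs /= lt_pk pair_row_sum; lia.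
have head_ge0 p : (p < k)%N -> 0 <= coord x p.
  move=> lt_pk.
  by case: (pair_ineq_lex_ge0 (norm_coord_le t_gt0 (k + p) box) (pair_ge0 p lt_pk)).
have upper := sat (Ordinal (leqnSn k.+1)).
rewrite Delta_mx_sum /Delta_row /Delta_rhs /= ltnn eqxx upper_row_sum in upper.
have lower := sat ord_max.
rewrite Delta_mx_sum /Delta_row /Delta_rhs /= ltnNge leqnSn gtn_eqF //= lower_row_sum in lower.
have [sum_le1 head0_or_weight0] := two_block_bounds
  (sumr_ge0 _ (fun (i : 'I_k) _ => head_ge0 i (ltn_ord i)))
  (tail_sum_bound box) (tail_weight_bound box) upper lower.
have tail_ge0 i : (i < d - k)%N -> 0 <= coord x (k + i).
  move=> lt_i; have lt_ik : (i < k)%N by lia.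
  case: head0_or_weight0 => [head0 | weight0].
    have coord_i0 : coord x i = 0.
      by apply: (psumr_eq0P _ head0 (i := Ordinal lt_ik)) => // j _; apply: head_ge0.
    have [_ partner_ge0] := pair_ineq_lex_ge0 (norm_coord_le t_gt0 (k + i) box) (pair_ge0 i lt_ik).
    exact: partner_ge0.
  have digit_lt j : `|coord x (k + j)| < t + 1 by rewrite ltzD1 (norm_coord_le t_gt0).
  by rewrite (base_expansion_eq0 digit_lt weight0 lt_i).
apply: Delta_nonneg_sum_le1 => [j|].
  rewrite -coordE; case: (ltnP j k) => [|le_kj]; first exact: head_ge0.
  by rewrite -(subnKC le_kj); apply: tail_ge0; have := ltn_ord j; lia.
under eq_bigr => j _ do rewrite -coordE.
by rewrite (sum_split_blocks (coord x)).
Qed.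

End DeltaSystem.

Theorem theorem3p4 (R : realType) (d : nat) (hd : (0 < d)%N) :
  exists r : nat, @rcl_is R d (@Delta d) r /\ (r <= (d.+1)./2 + 2)%N.
Proof.
set k := (d.+1)./2.
have k_le_d : (k <= d)%N by rewrite /k; lia.
have d_le_kk : (d <= k + k)%N by rewrite /k; lia.
rewrite addn2; apply: rcl_exists => t t_gt0.
exact: (relaxation_of_int_system R (Delta_satisfies t_gt0 k_le_d)
                                   (Delta_of_satisfies t_gt0 k_le_d d_le_kk)).
Qed.
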